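(* Let $m\ge 2$ and $\alpha\in[0,1]$. For elections with $m$ alternatives, the price of ignoring intensities under voluntary elicitation satisfies $$\mathsf{PoII}^v(\alpha)\ge\frac{3}{2\alpha^{\lfloor m/2\rfloor}+1}.$$
   Context: An election $\mathcal E=(N,A,\vec\sigma)$ has agents $N$, alternatives $A$ with $|A|=m$, and $\sigma_i=(\pi_i,\Join_i)$, where $\pi_i:[m]\to A$ is a bijection ($\pi_i(1)$ most preferred) and $\Join_i:[m-1]\to\{\succ,\succ\!\!\succ\}$. We write $\vec\pi$ for the ranking part of the profile. A metric $d$ on $N\cup A$ is nonnegative and symmetric, satisfies the triangle inequality, and has $d(x,x)=0$. The profile $\vec\sigma$ is $\alpha$-consistent with $d$ under voluntary elicitation if: - every agent $i$ has $d(i,\pi_i(j))\le d(i,\pi_i(j+1))$ for all $j\in[m-1]$; - whenever $\Join_i(j)=\,\succ\!\!\succ$, we have $d(i,\pi_i(j))\le\alpha\, d(i,\pi_i(j+1))$. Let $\mathsf{dist}^v_\alpha(a,\mathcal E)=\sup_d\sum_i d(i,a)/\min_b\sum_i d(i,b)$, with the supremum over metrics $d$ with which $\vec\sigma$ is $\alpha$-consistent under voluntary elicitation. The price of ignoring intensities is defined as follows. - $\mathsf{PoII}^v(a,\mathcal E,\alpha)=\mathsf{dist}^v_\alpha(a,\mathcal E)/\min_{b\in A}\mathsf{dist}^v_\alpha(b,\mathcal E)$. - $\mathsf{PoII}^v(a,\vec\pi,\alpha)=\max_{\mathcal E}\mathsf{PoII}^v(a,\mathcal E,\alpha)$, where the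 maximum is over elections with the same agents and alternatives and ranking part $\vec\pi$ (with arbitrary intensities). - $\mathrm{opt}^{v\text{-}\mathrm{ob}}_\alpha(\vec\pi)\in\arg\min_a\mathsf{PoII}^v(a,\vec\pi,\alpha)$. - $\mathsf{PoII}^v(\mathcal E,\alpha)=\mathsf{PoII}^v(\mathrm{opt}^{v\text{-}\mathrm{ob}}_\alpha(\vec\pi),\mathcal E,\alpha)$. - $\mathsf{PoII}^v(\alpha)=\sup_{\mathcal E}\mathsf{PoII}^v(\mathcal E,\alpha)$ over all elections with $m$ alternatives. *)

From HB Require Import structures.
From mathcomp Require Import all_boot all_order all_algebra all_fingroup.
From mathcomp Require Import boolp classical_sets reals constructive_ereal ereal.
Set Implicit Arguments. Unset Strict Implicit. Unset Printing Implicit Defensive.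
Import Order.TTheory GRing.Theory Num.Theory.
Local Open Scope ring_scope.
Local Open Scope classical_set_scope.

Section PoII.
Context {R : realType}.

(* Points of N ∪ A: agents are [inl i] (i : 'I_n), alternatives are [inr a]
   (a : 'I_m).  A profile ranking part [pi : 'I_n -> {perm 'I_m}] gives, for
   agent i, [pi i j] = the alternative ranked at (0-indexed) position j.
   Intensities [s : 'I_n -> 'I_m -> bool]: [s i j = true] means the
   comparison between positions j and j+1 is strong (≻≻); the value at
   the last position j = m-1 is irrelevant (there is no position m). *)

Definition is_metric {n m : nat} (d : 'I_n + 'I_m -> 'I_n + 'I_m -> R) : Prop :=
  forall x y z : 'I_n + 'I_m,
    0 <= d x y /\ d x y = d y x /\ d x x = 0 /\ d x z <= d x y + d y z.

Definition consistent_v {n m : nat} (alpha : R) (pi : 'I_n -> {perm 'I_m})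
    (s : 'I_n -> 'I_m -> bool) (d : 'I_n + 'I_m -> 'I_n + 'I_m -> R) : Prop :=
  forall (i : 'I_n) (j k : 'I_m), val k = (val j).+1 ->
    d (inl i) (inr (pi i j)) <= d (inl i) (inr (pi i k)) /\
    (s i j -> d (inl i) (inr (pi i j)) <= alpha * d (inl i) (inr (pi i k))).

Definition SC {n m : nat} (d : 'I_n + 'I_m -> 'I_n + 'I_m -> R) (a : 'I_m) : R :=
  \sum_(i < n) d (inl i) (inr a).

(* min_b SC d b  (seeded with SC d a, which is one of the terms) *)
Definition minSC {n m : nat} (d : 'I_n + 'I_m -> 'I_n + 'I_m -> R) (a : 'I_m) : R :=
  \big[Num.min/SC d a]_(b < m) SC d b.

Definition eratio (x y : \bar R) : \bar R :=
  match y with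
  | r%:E => if r == 0 then (if x == 0%E then 1%E else +oo%E) else (x * (r^-1)%:E)%E
  | +oo%E => if x == +oo%E then 1%E else 0%E
  | -oo%E => 0%E
  end.

Definition dist_v {n m : nat} (alpha : R) (pi : 'I_n -> {perm 'I_m})
    (s : 'I_n -> 'I_m -> bool) (a : 'I_m) : \bar R :=
  ereal_sup [set eratio (SC d a)%:E (minSC d a)%:E |
              d in [set d | is_metric d /\ consistent_v alpha pi s d]].

Definition min_dist_v {n m : nat} (alpha : R) (pi : 'I_n -> {perm 'I_m})
    (s : 'I_n -> 'I_m -> bool) (a : 'I_m) : \bar R :=
  \big[Order.min/dist_v alpha pi s a]_(b < m) dist_v alpha pi s b.

Definition PoII_E {n m : nat} (alpha : R) (pi : 'I_n -> {perm 'I_m})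
    (s : 'I_n -> 'I_m -> bool) (a : 'I_m) : \bar R :=
  eratio (dist_v alpha pi s a) (min_dist_v alpha pi s a).

Definition PoII_pi {n m : nat} (alpha : R) (pi : 'I_n -> {perm 'I_m})
    (a : 'I_m) : \bar R :=
  ereal_sup [set PoII_E alpha pi s a | s in [set: 'I_n -> 'I_m -> bool]].

(* opt is a selection of opt^{v-ob}_alpha: for every number of agents n and
   ranking profile pi, opt n pi is in argmin_a PoII^v(a, pi, alpha). *)
Definition is_opt_vob (m : nat) (alpha : R)
    (opt : forall n : nat, ('I_n -> {perm 'I_m}) -> 'I_m) : Prop :=
  forall (n : nat) (pi : 'I_n -> {perm 'I_m}) (b : 'I_m),
    (PoII_pi alpha pi (opt n pi) <= PoII_pi alpha pi b)%E.

Definition PoII_v (m : nat) (alpha : R)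
    (opt : forall n : nat, ('I_n -> {perm 'I_m}) -> 'I_m) : \bar R :=
  ereal_sup [set x | exists (n : nat) (pi : 'I_n -> {perm 'I_m})
                             (s : 'I_n -> 'I_m -> bool),
                       (0 < n)%N /\ x = PoII_E alpha pi s (opt n pi)].

End PoII.

From HB Require Import structures.
From mathcomp Require Import all_boot all_order all_algebra all_fingroup.
From mathcomp Require Import boolp classical_sets reals constructive_ereal ereal.
From mathcomp Require Import lra zify.
Set Implicit Arguments. Unset Strict Implicit. Unset Printing Implicit Defensive.
Import Order.TTheory GRing.Theory Num.Theory.
Local Open Scope ring_scope.

(* Take two agents: agent 0 ranks the alternatives 0, 1, ..., m-1 and agent 1
   ranks the same cycle starting from K = m/2.  Since K + K <= m, whichever
   alternative a is selected, some agent v ranks a at position K or lower, and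
   every alternative c is either ranked by v at position K or lower, or ranked
   by the other agent u below v's top choice f.  Declaring v's first K
   comparisons strong forces d(v,f) <= alpha^K d(v,c) in the first case, whence
   SC(f) <= (2 alpha^K + 1) SC(c) by the triangle inequality, and
   SC(f) <= SC(c) in the second; so dist(f) <= 2 alpha^K + 1.  A metric on the
   line shows dist(a) >= 3. *)

Lemma le_eratio (R : realType) (p B : R) (x y : \bar R) :
  0 < p -> 0 < B -> (p%:E <= x)%E -> (0 <= y)%E -> (y <= B%:E)%E ->
  ((p / B)%:E <= eratio x y)%E.
Proof.
move=> p_gt0 B_gt0 px; case: y => [r| |] //; rewrite !lee_fin => r_ge0 rB /=.
have [r0|r_neq0] := eqVneq r 0.
  by rewrite gt_eqF ?leey // (lt_le_trans _ px) ?lte_fin.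
have r_gt0 : 0 < r by rewrite lt_def r_neq0 r_ge0.
apply: le_trans (lee_wpmul2r _ px); last by rewrite lee_fin invr_ge0.
by rewrite -EFinM lee_fin ler_pM2l // lef_pV2.
Qed.

Section SocialCost.
Variables (R : realType) (n m : nat) (d : 'I_n + 'I_m -> 'I_n + 'I_m -> R).
Hypothesis d_metric : is_metric d.

Lemma SC_ge0 b : 0 <= SC d b.
Proof. by apply: sumr_ge0 => i _; have [] := d_metric (inl i) (inr b) (inr b). Qed.

Lemma minSC_ge0 b : 0 <= minSC d b.
Proof. by apply: le_bigmin => [|c _]; apply: SC_ge0. Qed.

Lemma minSC_le a b : minSC d a <= SC d b.
Proof. exact: bigmin_le. Qed.

Lemma eratio_SC_ge0 b : (0 <= eratio (SC d b)%:E (minSC d b)%:E)%E.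
Proof.
rewrite /eratio; case: eqP => [_|_]; first by case: ifP.
by rewrite -EFinM lee_fin mulr_ge0 ?invr_ge0 ?SC_ge0 ?minSC_ge0.
Qed.

Lemma eratio_SC_le f (B : R) : 1 <= B -> (forall c, SC d f <= B * SC d c) ->
  (eratio (SC d f)%:E (minSC d f)%:E <= B%:E)%E.
Proof.
move=> B1 SCf_le; have B0 : 0 < B by lra.
have minSC_ge : SC d f <= B * minSC d f.
  by rewrite -ler_pdivrMl //; apply: le_bigmin => [|c _]; rewrite ler_pdivrMl.
have [min0|min_neq0] := eqVneq (minSC d f) 0.
  have SCf0 : SC d f = 0 by apply/le_anti; rewrite SC_ge0 andbT -(mulr0 B) -min0.
  by rewrite /eratio min0 eqxx SCf0 eqxx lee_fin.
have min_gt0 : 0 < minSC d f by rewrite lt_def min_neq0 minSC_ge0.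
by rewrite /eratio (negbTE min_neq0) -EFinM lee_fin ler_pdivrMr // mulrC.
Qed.

End SocialCost.

Lemma SC_two_agents (R : realType) m (d : 'I_2 + 'I_m -> 'I_2 + 'I_m -> R)
    (u v : 'I_2) b :
  u != v -> SC d b = d (inl u) (inr b) + d (inl v) (inr b).
Proof.
move=> uv; rewrite /SC (bigD1 u) //=; congr (_ + _); apply: big_pred1 => i /=.
by move: i u v uv => [[|[|?]] ?] [[|[|?]] ?] [[|[|?]] ?].
Qed.

Lemma is_metric_line (R : realType) n m (p : 'I_n + 'I_m -> R) :
  is_metric (fun x y => `|p x - p y|).
Proof.
move=> x y z; split; first exact: normr_ge0.
by rewrite [`|p y - p x|]distrC subrr normr0 (ler_distD (p y)).
Qed.

Section Consistency.
Variables (R : realType) (n m : nat) (alpha : R) (pi : 'I_n -> {perm 'I_m.+1}).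
Variables (s : 'I_n -> 'I_m.+1 -> bool) (d : 'I_n + 'I_m.+1 -> 'I_n + 'I_m.+1 -> R).
Hypotheses (alpha_ge0 : 0 <= alpha) (d_cons : consistent_v alpha pi s d).

Let dist_at (i : 'I_n) (k : nat) := d (inl i) (inr (pi i (inord k))).

Lemma dist_at_succ i k : (k < m)%N ->
  dist_at i k <= dist_at i k.+1 /\
  (s i (inord k) -> dist_at i k <= alpha * dist_at i k.+1).
Proof. by move=> km; apply: d_cons; rewrite /= !inordK // ltnW. Qed.

Lemma consistent_v_mono i (j j' : 'I_m.+1) : (j <= j')%N ->
  d (inl i) (inr (pi i j)) <= d (inl i) (inr (pi i j')).
Proof.
have mono : {in [pred k | (k <= m)%N] &,
  {homo dist_at i : k k' / (k <= k')%N >-> k <= k'}}.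
  apply: (homo_leq_in lexx le_trans) => [? k _ km l /andP[_ /ltnW lk]|k _ km].
    exact: leq_trans lk km.
  by have [] := dist_at_succ i km.
move=> jj'; have := mono j j' (ltn_ord j) (ltn_ord j') jj'.
by rewrite /dist_at !inord_val.
Qed.

Lemma consistent_v_strong_prefix i K (j : 'I_m.+1) :
  (forall j : 'I_m.+1, (j < K)%N -> s i j) -> (K <= j)%N ->
  d (inl i) (inr (pi i ord0)) <= alpha ^+ K * d (inl i) (inr (pi i j)).
Proof.
move=> strong Kj; have Km : (K <= m)%N by rewrite -ltnS (leq_ltn_trans Kj).
pose g k := alpha ^+ k * dist_at i k.
have mono : {in [pred k | (k <= K)%N] &,
  {homo g : k k' / (k <= k')%N >-> k <= k'}}.
  apply: (homo_leq_in lexx le_trans) => [? k _ kK l /andP[_ /ltnW lk]|k _ kK].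
    exact: leq_trans lk kK.
  have km : (k < m)%N by apply: leq_trans kK Km.
  have [_ strong_step] := dist_at_succ i km.
  rewrite /g exprSr -mulrA ler_wpM2l ?exprn_ge0 //.
  by apply/strong_step/strong; rewrite inordK // ltnS ltnW.
have top : g 0%N = d (inl i) (inr (pi i ord0)).
  rewrite /g expr0 mul1r /dist_at; congr (d _ (inr (pi i _))).
  by apply: val_inj; rewrite /= inordK.
rewrite -top; apply: le_trans (mono 0%N K isT (leqnn K) (leq0n K)) _.
rewrite /g ler_wpM2l ?exprn_ge0 // /dist_at.
by apply: consistent_v_mono; rewrite inordK // ltnS.
Qed.

End Consistency.

Lemma eratio_SC_le_dist_v (R : realType) n m (alpha : R) pi s
    (d : 'I_n + 'I_m -> 'I_n + 'I_m -> R) b :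
  is_metric d -> consistent_v alpha pi s d ->
  (eratio (SC d b)%:E (minSC d b)%:E <= dist_v alpha pi s b)%E.
Proof. by move=> d_metric d_cons; apply: ereal_sup_ubound; exists d. Qed.

Lemma dist_v_ge0 (R : realType) n m (alpha : R) pi s
    (d : 'I_n + 'I_m -> 'I_n + 'I_m -> R) b :
  is_metric d -> consistent_v alpha pi s d -> (0 <= dist_v alpha pi s b)%E.
Proof.
move=> d_metric d_cons; apply: le_trans (eratio_SC_le_dist_v b d_metric d_cons).
exact: eratio_SC_ge0.
Qed.

Definition strong_prefix n m (v : 'I_n) (K : nat) : 'I_n -> 'I_m -> bool :=
  fun i j => (i == v) && (j < K)%N.

Section TwoAgents.
Variables (R : realType) (m : nat) (alpha : R) (pi : 'I_2 -> {perm 'I_m.+1}).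
Variables (u v : 'I_2) (K : nat).
Hypotheses (uv : u != v) (alpha_ge0 : 0 <= alpha).

Local Notation s := (strong_prefix v K).
Local Notation top := (pi v ord0).

Section UpperBound.
Variable d : 'I_2 + 'I_m.+1 -> 'I_2 + 'I_m.+1 -> R.
Hypotheses (d_metric : is_metric d) (d_cons : consistent_v alpha pi s d).

Lemma SC_top_le_low_ranked c : (K <= (pi v)^-1%g c)%N ->
  SC d top <= (2 * alpha ^+ K + 1) * SC d c.
Proof.
move=> Kc; rewrite !(SC_two_agents _ _ uv).
have strong (j : 'I_m.+1) : (j < K)%N -> s v j by rewrite /strong_prefix eqxx.
have := consistent_v_strong_prefix alpha_ge0 d_cons strong Kc; rewrite permKV.
have [_ [_ [_ tri_u]]] := d_metric (inl u) (inr c) (inr top).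
have [_ [sym_cv [_ tri_c]]] := d_metric (inr c) (inl v) (inr top).
have [duc_ge0 _] := d_metric (inl u) (inr c) (inr c).
have [dvc_ge0 _] := d_metric (inl v) (inr c) (inr c).
have : 0 <= alpha ^+ K by apply: exprn_ge0.
rewrite sym_cv in tri_c; nra.
Qed.

Lemma SC_top_le_preferred c : ((pi u)^-1%g top <= (pi u)^-1%g c)%N ->
  SC d top <= SC d c.
Proof.
move=> pref; rewrite !(SC_two_agents _ _ uv) lerD //.
  by have := consistent_v_mono d_cons u pref; rewrite !permKV.
have top_first : (@ord0 m <= (pi v)^-1%g c)%N by [].
by have := consistent_v_mono d_cons v top_first; rewrite permKV.
Qed.

End UpperBound.

Lemma dist_v_top_le :
  (forall c, (K <= (pi v)^-1%g c)%N \/ ((pi u)^-1%g top <= (pi u)^-1%g c)%N) ->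
  (dist_v alpha pi s top <= (2 * alpha ^+ K + 1)%:E)%E.
Proof.
move=> cover; apply: ge_ereal_sup => _ [d [d_metric d_cons] <-].
have B1 : 1 <= 2 * alpha ^+ K + 1 by have := exprn_ge0 K alpha_ge0; lra.
apply: eratio_SC_le => // c; have [Kc|pref] := cover c.
  exact: SC_top_le_low_ranked.
apply: (le_trans (SC_top_le_preferred d_cons pref)).
by rewrite -[X in X <= _]mul1r ler_wpM2r // SC_ge0.
Qed.

Section LowerBound.
Variable a : 'I_m.+1.
Hypotheses (K_gt0 : (0 < K)%N) (K_le_a : (K <= (pi v)^-1%g a)%N).

(* Under this placement a costs 3 and v's top costs 1, while every strong
   comparison of v lies above a, between alternatives at distance 0 from v. *)
Definition witness_place (x : 'I_2 + 'I_m.+1) : R :=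
  match x with
  | inl i => if i == v then 0 else 1
  | inr c => if ((pi v)^-1%g c < (pi v)^-1%g a)%N then 0 else 2
  end.

Local Notation witness := (fun x y => `|witness_place x - witness_place y|).

Lemma witness_v c :
  witness (inl v) (inr c) = if ((pi v)^-1%g c < (pi v)^-1%g a)%N then 0 else 2.
Proof.
by rewrite /= eqxx; case: ifP; rewrite ?subrr ?normr0 // sub0r normrN ger0_norm.
Qed.

Lemma witness_other i c : i != v -> witness (inl i) (inr c) = 1.
Proof.
move=> iv; rewrite /= (negbTE iv).
by case: ifP => _; [rewrite subr0 normr1 | rewrite ler0_norm; lra].
Qed.

Lemma witness_consistent : consistent_v alpha pi s witness.
Proof.
move=> i j k jk; have [->|iv] := eqVneq i v; last first.
  by rewrite /strong_prefix (negbTE iv) !witness_other.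
rewrite /strong_prefix eqxx !witness_v !permK jk.
have [ja|aj] := ltnP j ((pi v)^-1%g a).
  by split=> [|_]; case: ifP => _; rewrite ?mulr_ge0 //; lra.
rewrite /= ltnNge (leqW aj) /=; split=> // jK.
by move: (leq_trans K_le_a aj); rewrite leqNgt jK.
Qed.

Lemma dist_v_witness_ge : (3%:E <= dist_v alpha pi s a)%E.
Proof.
have w_metric := is_metric_line witness_place.
apply: le_trans (eratio_SC_le_dist_v a w_metric witness_consistent).
have SC_a : SC witness a = 3.
  by rewrite (SC_two_agents _ _ uv) witness_other // witness_v ltnn; lra.
have SC_top : SC witness top = 1.
  rewrite (SC_two_agents _ _ uv) witness_other // witness_v permK.
  by rewrite (leq_trans K_gt0 K_le_a) addr0.
rewrite -[3]divr1 SC_a; apply: le_eratio; rewrite ?lee_fin ?minSC_ge0 //.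
by rewrite -SC_top minSC_le.
Qed.

Lemma PoII_E_strong_prefix_ge :
  (forall c, (K <= (pi v)^-1%g c)%N \/ ((pi u)^-1%g top <= (pi u)^-1%g c)%N) ->
  ((3 / (2 * alpha ^+ K + 1))%:E <= PoII_E alpha pi s a)%E.
Proof.
move=> cover; have w_metric := is_metric_line witness_place.
apply: le_eratio; first by [].
- by have := exprn_ge0 K alpha_ge0; lra.
- exact: dist_v_witness_ge.
- by apply: le_bigmin => [|b _]; apply: dist_v_ge0 w_metric witness_consistent.
- by apply: le_trans (dist_v_top_le cover); apply: bigmin_le.
Qed.

End LowerBound.

End TwoAgents.

Section RotationProfile.
Variables (n K : nat).

Definition ord_shift (j : 'I_n.+1) : 'I_n.+1 := inord ((j + K) %% n.+1)%N.

Lemma ord_shift_inj : injective ord_shift.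
Proof.
move=> x y /(congr1 val); rewrite /= !inordK ?ltn_pmod // => /eqP.
by rewrite eqn_modDr !modn_small // => /eqP /val_inj.
Qed.

Definition rot_profile (i : 'I_2) : {perm 'I_n.+1} :=
  if i == ord0 then 1%g else perm ord_shift_inj.

Lemma rot_profile0_inv c : (rot_profile ord0)^-1%g c = c.
Proof. by rewrite /rot_profile eqxx invg1 perm1. Qed.

Lemma rot_profile1_top : val (rot_profile ord_max ord0) = (K %% n.+1)%N.
Proof. by rewrite /rot_profile /= permE /ord_shift inordK ?ltn_pmod. Qed.

Lemma rot_profile1_inv (c : 'I_n.+1) : (K <= n.+1)%N -> (c < K)%N ->
  val ((rot_profile ord_max)^-1%g c) = (c + (n.+1 - K))%N.
Proof.
move=> K_le cK; have c_lt : (c + (n.+1 - K) < n.+1)%N by lia.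
have -> : (rot_profile ord_max)^-1%g c = inord (c + (n.+1 - K)).
  apply: (canLR (permK _)); apply/val_inj.
  rewrite /rot_profile /= permE /ord_shift inordK ?ltn_pmod // inordK //.
  by rewrite -addnA subnK // modnDr modn_small.
by rewrite /= inordK.
Qed.

End RotationProfile.

Lemma PoII_E_rot_profile_ge (R : realType) (alpha : R) n K a :
  0 <= alpha -> (0 < K)%N -> (K + K <= n.+1)%N ->
  exists s, ((3 / (2 * alpha ^+ K + 1))%:E <= PoII_E alpha (rot_profile n K) s a)%E.
Proof.
move=> alpha_ge0 K_gt0 KK; have K_le : (K <= n.+1)%N by lia.
have [aK|Ka] := ltnP a K.
  exists (strong_prefix ord_max K).
  apply: (PoII_E_strong_prefix_ge (u := ord0)) => //.
    by rewrite rot_profile1_inv //; lia.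
  move=> c; have [cK|Kc] := ltnP c K.
    by left; rewrite rot_profile1_inv //; lia.
  by right; rewrite !rot_profile0_inv rot_profile1_top modn_small //; lia.
exists (strong_prefix ord0 K).
apply: (PoII_E_strong_prefix_ge (u := ord_max)) => //.
  by rewrite rot_profile0_inv.
move=> c; have [cK|Kc] := ltnP c K; last by left; rewrite rot_profile0_inv.
by right; rewrite /rot_profile eqxx perm1 !rot_profile1_inv // leq_add2r.
Qed.

Theorem theorem10 (R : realType) (m : nat) (alpha : R)
    (opt : forall n : nat, ('I_n -> {perm 'I_m}) -> 'I_m) :
  (2 <= m)%N -> 0 <= alpha -> alpha <= 1 ->
  is_opt_vob alpha opt ->
  ((3 / (2 * alpha ^+ (m./2) + 1))%:E <= PoII_v alpha opt)%E.
Proof.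
(* The bound holds whatever alternative is selected. *)
move=> m_ge2 alpha_ge0 _ _.
case: m m_ge2 opt => [|[|n]] // _ opt.
set K := n.+2./2; set pi := rot_profile n.+1 K.
have K_gt0 : (0 < K)%N by rewrite /K; lia.
have KK : (K + K <= n.+2)%N by rewrite /K; lia.
have [s bad] := PoII_E_rot_profile_ge (opt 2%N pi) alpha_ge0 K_gt0 KK.
by apply: le_trans bad _; apply: ereal_sup_ubound; exists 2%N, pi, s.
Qed.
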